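(* Let $F$ be a closed continuous frieze pattern with period $T$. Then there is a $T$-periodic function $k:\mathbb{R}\to\mathbb{R}$ such that, for all $x,y$, $$F_{xx}(x,y)=k(x)F(x,y),\qquad F_{yy}(x,y)=k(y)F(x,y),$$ i.e. $F$, as a function of $x$ alone or of $y$ alone, satisfies the same Hill equation $u''=k u$; moreover every solution of $u''=ku$ is $T$-antiperiodic, $u(t+T)=-u(t)$ (the monodromy is $-\mathrm{Id}$).
   Context: A closed continuous frieze pattern with period $T>0$ is a smooth function $F:\mathbb{R}^2\to\mathbb{R}$ satisfying the Liouville-type equation $F F_{xy}-F_xF_y=1$ on $\mathbb{R}^2$ together with the conditions: $F(x,x)=0$ and $F_y(x,x)=1$ for all $x$ (here $F_y(x,x)$ means $\partial F/\partial y$ evaluated at $(x,x)$); $F(x,y)>0$ whenever $x<y<x+T$; and $F(x+T,y)=F(x,y+T)=-F(x,y)$ for all $x,y$. *)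

From Stdlib Require Import Reals.
Open Scope R_scope.

Definition continuous2 (f : R -> R -> R) : Prop :=
  forall x y eps, 0 < eps -> exists delta, 0 < delta /\
    forall x' y', Rabs (x' - x) < delta -> Rabs (y' - y) < delta ->
      Rabs (f x' y' - f x y) < eps.

(* [partials F D] : F is smooth (C^infinity) on R^2 and D i j is the
   mixed partial derivative d^i/dx^i d^j/dy^j F (all of them exist and
   are jointly continuous).  D is uniquely determined by F. *)
Definition partials (F : R -> R -> R) (D : nat -> nat -> R -> R -> R) : Prop :=
  D O O = F /\
  (forall i j x y, derivable_pt_lim (fun s => D i j s y) x (D (S i) j x y)) /\
  (forall i j x y, derivable_pt_lim (fun s => D i j x s) y (D i (S j) x y)) /\
  (forall i j, continuous2 (D i j)).

Definition closed_frieze (F : R -> R -> R) (D : nat -> nat -> R -> R -> R) (T : R)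
  : Prop :=
  0 < T /\
  partials F D /\
  (forall x y, F x y * D 1%nat 1%nat x y - D 1%nat 0%nat x y * D 0%nat 1%nat x y = 1) /\
  (forall x, F x x = 0) /\
  (forall x, D 0%nat 1%nat x x = 1) /\
  (forall x y, x < y < x + T -> 0 < F x y) /\
  (forall x y, F (x + T) y = - F x y) /\
  (forall x y, F x (y + T) = - F x y).

(* Write F, Fx, Fy, Fxx, ... for the partial derivatives D i j of the frieze.
   Differentiating the Liouville equation F Fxy - Fx Fy = 1 shows that
   h := Fxx Fxy - Fx Fxxy satisfies Fxx = h F, and that dh/dy vanishes (first
   wherever F <> 0, and then, after one more differentiation, also on the
   zero set of F, where Fx Fy = -1).  Hence k(x) := h(x,x) satisfies
   Fxx = k(x) F.  The boundary conditions F(s,s) = 0, Fy(s,s) = 1 force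
   Fx(s,s) = -1; so for every solution u of u'' = k u the Wronskian
   u Fx(.,s) - u' F(.,s) is the constant -u(s).  Applied to u = F(.,r) this
   gives antisymmetry F(r,s) = -F(s,r), hence Fyy = k(y) F; applied at
   s = t + T together with the antiperiodicity of F it gives u(t+T) = -u(t).
   Finally k is T-periodic because Fxx and F are both T-antiperiodic in x and
   F does not vanish between the diagonals. *)

From Stdlib Require Import Reals Lra.
Open Scope R_scope.

Lemma dlim_mult (f g : R -> R) (x a b : R) :
  derivable_pt_lim f x a -> derivable_pt_lim g x b ->
  derivable_pt_lim (fun s => f s * g s) x (a * g x + f x * b).
Proof. intros; now apply derivable_pt_lim_mult. Qed.

Lemma dlim_minus (f g : R -> R) (x a b : R) :
  derivable_pt_lim f x a -> derivable_pt_lim g x b ->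
  derivable_pt_lim (fun s => f s - g s) x (a - b).
Proof. intros; now apply derivable_pt_lim_minus. Qed.

Lemma dlim_opp (f : R -> R) (x a : R) :
  derivable_pt_lim f x a -> derivable_pt_lim (fun s => - f s) x (- a).
Proof. intros; now apply derivable_pt_lim_opp. Qed.

Lemma dlim_eq (f : R -> R) (x a b : R) :
  derivable_pt_lim f x a -> a = b -> derivable_pt_lim f x b.
Proof. intros H ->; exact H. Qed.

Lemma dlim_shift (f : R -> R) (x T l : R) :
  derivable_pt_lim f (x + T) l -> derivable_pt_lim (fun s => f (s + T)) x l.
Proof.
  intro H.
  assert (Hs : derivable_pt_lim (fun s => s + T) x 1).
  { apply (dlim_eq _ _ (1 + 0)); [| ring].
    apply (derivable_pt_lim_plus id (fun _ => T));
      [apply derivable_pt_lim_id | apply derivable_pt_lim_const]. }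
  apply (dlim_eq _ _ (l * 1)); [| ring].
  exact (derivable_pt_lim_comp (fun s => s + T) f x 1 l Hs H).
Qed.

Lemma dlim_ext_unique (f g : R -> R) (x l m : R) :
  (forall s, f s = g s) ->
  derivable_pt_lim f x l -> derivable_pt_lim g x m -> l = m.
Proof.
  intros Hfg Hf Hg.
  exact (uniqueness_limite g x l m (derivable_pt_lim_ext f g x l Hfg Hf) Hg).
Qed.

Lemma dlim_of_constant (f : R -> R) (c x l : R) :
  (forall s, f s = c) -> derivable_pt_lim f x l -> l = 0.
Proof.
  intros Hf Hl; exact (dlim_ext_unique f (fun _ => c) x l 0 Hf Hl
                        (derivable_pt_lim_const c x)).
Qed.

Lemma constant_of_zero_derivative (f : R -> R) :
  (forall t, derivable_pt_lim f t 0) -> forall a b, f a = f b.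
Proof.
  intros H a b.
  destruct (Rtotal_order a b) as [h | [-> | h]]; [| reflexivity |].
  - destruct (MVT_cor2 f (fun _ => 0) a b h (fun c _ => H c)) as [c [e _]]; lra.
  - destruct (MVT_cor2 f (fun _ => 0) b a h (fun c _ => H c)) as [c [e _]]; lra.
Qed.

Lemma derivative_antiperiodic (f f' : R -> R) (T : R) :
  (forall s, derivable_pt_lim f s (f' s)) ->
  (forall s, f (s + T) = - f s) -> forall s, f' (s + T) = - f' s.
Proof.
  intros Hf Hper s.
  exact (dlim_ext_unique (fun r => f (r + T)) (fun r => - f r) s _ _ Hper
           (dlim_shift f s T _ (Hf (s + T))) (dlim_opp f s _ (Hf s))).
Qed.

Section Frieze.

Variable D : nat -> nat -> R -> R -> R.

Local Notation F := (D 0%nat 0%nat).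
Local Notation Fx := (D 1%nat 0%nat).
Local Notation Fy := (D 0%nat 1%nat).
Local Notation Fxx := (D 2%nat 0%nat).
Local Notation Fxy := (D 1%nat 1%nat).
Local Notation Fyy := (D 0%nat 2%nat).
Local Notation Fxxy := (D 2%nat 1%nat).
Local Notation Fxyy := (D 1%nat 2%nat).
Local Notation Fxxyy := (D 2%nat 2%nat).

Hypothesis D_dx : forall i j x y,
  derivable_pt_lim (fun s => D i j s y) x (D (S i) j x y).
Hypothesis D_dy : forall i j x y,
  derivable_pt_lim (fun s => D i j x s) y (D i (S j) x y).
Hypothesis liouville : forall x y, F x y * Fxy x y - Fx x y * Fy x y = 1.

Lemma liouville_dx x y : F x y * Fxxy x y - Fxx x y * Fy x y = 0.
Proof.
  apply (dlim_of_constant (fun s => F s y * Fxy s y - Fx s y * Fy s y) 1 x);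
    [intro; apply liouville |].
  eapply dlim_eq; [apply dlim_minus; apply dlim_mult; apply D_dx | cbv beta; ring].
Qed.

Lemma liouville_dy x y : F x y * Fxyy x y - Fx x y * Fyy x y = 0.
Proof.
  apply (dlim_of_constant (fun s => F x s * Fxy x s - Fx x s * Fy x s) 1 y);
    [intro; apply liouville |].
  eapply dlim_eq; [apply dlim_minus; apply dlim_mult; apply D_dy | cbv beta; ring].
Qed.

Lemma liouville_dxdy x y : F x y * Fxxyy x y - Fxx x y * Fyy x y = 0.
Proof.
  apply (dlim_of_constant (fun s => F x s * Fxxy x s - Fxx x s * Fy x s) 0 y);
    [intro; apply liouville_dx |].
  eapply dlim_eq; [apply dlim_minus; apply dlim_mult; apply D_dy | cbv beta; ring].
Qed.

(* The candidate potential h with Fxx = h F (see [Fxx_liouville_potential]). *)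
Definition liouville_potential (x y : R) : R :=
  Fxx x y * Fxy x y - Fx x y * Fxxy x y.

Definition liouville_potential_dy (x y : R) : R :=
  Fxx x y * Fxyy x y - Fx x y * Fxxyy x y.

Lemma F_mul_potential_dy x y : F x y * liouville_potential_dy x y = 0.
Proof.
  unfold liouville_potential_dy.
  replace (F x y * (Fxx x y * Fxyy x y - Fx x y * Fxxyy x y))
    with (Fxx x y * (F x y * Fxyy x y - Fx x y * Fyy x y)
          - Fx x y * (F x y * Fxxyy x y - Fxx x y * Fyy x y)) by ring.
  rewrite liouville_dy, liouville_dxdy; ring.
Qed.

(* On the zero set of F the Liouville equation gives Fx Fy = -1. *)
Lemma Fy_neq_0_on_zeros x y : F x y = 0 -> Fy x y <> 0.
Proof.
  intros HF HFy; pose proof (liouville x y) as L.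
  rewrite HF, HFy in L; lra.
Qed.

(* dh/dy vanishes: away from the zeros of F this is [F_mul_potential_dy];
   at a zero, differentiating that identity in y leaves Fy * dh/dy = 0. *)
Lemma potential_dy_zero x y : liouville_potential_dy x y = 0.
Proof.
  destruct (Req_dec (F x y) 0) as [HF | HF].
  - assert (Hd : derivable_pt_lim (fun s => F x s * liouville_potential_dy x s) y
        (Fy x y * liouville_potential_dy x y + F x y *
          (Fxxy x y * Fxyy x y + Fxx x y * D 1%nat 3%nat x y
           - (Fxy x y * Fxxyy x y + Fx x y * D 2%nat 3%nat x y)))).
    { apply dlim_mult; [apply D_dy |].
      eapply dlim_eq; [apply dlim_minus; apply dlim_mult; apply D_dy | cbv beta; ring]. }
    pose proof (dlim_of_constant _ 0 y _ (F_mul_potential_dy x) Hd) as Hz.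
    rewrite HF, Rmult_0_l, Rplus_0_r in Hz.
    destruct (Rmult_integral _ _ Hz) as [Hy | Hp]; [| exact Hp].
    exfalso; exact (Fy_neq_0_on_zeros x y HF Hy).
  - apply (Rmult_eq_reg_l (F x y)); [| exact HF].
    rewrite F_mul_potential_dy; ring.
Qed.

Lemma liouville_potential_diag x y : liouville_potential x y = liouville_potential x x.
Proof.
  apply (constant_of_zero_derivative (liouville_potential x)); intro t.
  unfold liouville_potential.
  eapply dlim_eq; [apply dlim_minus; apply dlim_mult; apply D_dy |].
  rewrite <- (potential_dy_zero x t); unfold liouville_potential_dy; ring.
Qed.

(* Pure algebra: multiply Fxx by the Liouville identity and use [liouville_dx]. *)
Lemma Fxx_liouville_potential x y : Fxx x y = liouville_potential x y * F x y.
Proof.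
  unfold liouville_potential.
  rewrite <- (Rmult_1_r (Fxx x y)) at 1; rewrite <- (liouville x y).
  transitivity (Fxx x y * (F x y * Fxy x y - Fx x y * Fy x y)
                - Fx x y * (F x y * Fxxy x y - Fxx x y * Fy x y)).
  - rewrite liouville_dx; ring.
  - ring.
Qed.

Definition hill_potential (x : R) : R := liouville_potential x x.

Theorem hill_x x y : Fxx x y = hill_potential x * F x y.
Proof.
  unfold hill_potential; rewrite <- (liouville_potential_diag x y).
  apply Fxx_liouville_potential.
Qed.

Hypothesis F_diag : forall x, F x x = 0.
Hypothesis Fy_diag : forall x, Fy x x = 1.

Lemma Fx_diag s : Fx s s = -1.
Proof. pose proof (liouville s s) as L; rewrite F_diag, Fy_diag in L; lra. Qed.

(* The Wronskian of a solution u with F(., s) is constant, and equals -u(s)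
   by evaluation on the diagonal t = s. *)
Lemma wronskian (u u' : R -> R) :
  (forall t, derivable_pt_lim u t (u' t)) ->
  (forall t, derivable_pt_lim u' t (hill_potential t * u t)) ->
  forall t s, u t * Fx t s - u' t * F t s = - u s.
Proof.
  intros Hu Hu' t s.
  assert (Hconst : forall r, derivable_pt_lim
            (fun r => u r * Fx r s - u' r * F r s) r 0).
  { intro r; eapply dlim_eq;
      [apply dlim_minus; apply dlim_mult; auto; apply D_dx |].
    rewrite hill_x; cbv beta; ring. }
  rewrite (constant_of_zero_derivative _ Hconst t s), Fx_diag, F_diag; ring.
Qed.

Lemma F_antisymmetric r s : F r s = - F s r.
Proof.
  pose proof (wronskian (fun t => F t r) (fun t => Fx t r) (fun t => D_dx 0 0 t r)
    (fun t => dlim_eq _ _ _ _ (D_dx 1 0 t r) (hill_x t r)) r s) as W.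
  simpl in W; rewrite F_diag, Fx_diag in W; lra.
Qed.

Lemma Fy_antisymmetric x y : Fy x y = - Fx y x.
Proof.
  exact (dlim_ext_unique (fun s => F x s) (fun s => - F s x) y _ _
           (F_antisymmetric x) (D_dy 0 0 x y) (dlim_opp _ _ _ (D_dx 0 0 y x))).
Qed.

Theorem hill_y x y : Fyy x y = hill_potential y * F x y.
Proof.
  rewrite (dlim_ext_unique (fun s => Fy x s) (fun s => - Fx s x) y _ _
             (Fy_antisymmetric x) (D_dy 0 1 x y) (dlim_opp _ _ _ (D_dx 1 0 y x))).
  rewrite hill_x, (F_antisymmetric y x); ring.
Qed.

Variable T : R.
Hypothesis T_pos : 0 < T.
Hypothesis F_positive : forall x y, x < y < x + T -> 0 < F x y.
Hypothesis F_antiperiodic_x : forall x y, F (x + T) y = - F x y.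
Hypothesis F_antiperiodic_y : forall x y, F x (y + T) = - F x y.

Lemma Fxx_antiperiodic x y : Fxx (x + T) y = - Fxx x y.
Proof.
  apply (derivative_antiperiodic (fun s => Fx s y) (fun s => Fxx s y));
    [intro; apply D_dx |].
  apply (derivative_antiperiodic (fun s => F s y) (fun s => Fx s y));
    [intro; apply D_dx |].
  intro; apply F_antiperiodic_x.
Qed.

(* Compare Fxx = k F at x and x + T, at a point y where F(x+T, y) > 0. *)
Theorem hill_potential_periodic t : hill_potential (t + T) = hill_potential t.
Proof.
  set (y := t + T + T / 2).
  assert (Hpos : 0 < F (t + T) y) by (apply F_positive; unfold y; lra).
  apply (Rmult_eq_reg_r (F (t + T) y)); [| lra].
  rewrite <- hill_x, Fxx_antiperiodic, hill_x, F_antiperiodic_x; ring.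
Qed.

(* The monodromy of u'' = k u is -Id: evaluate the Wronskian at s = t + T. *)
Theorem hill_solutions_antiperiodic (u u' : R -> R) :
  (forall t, derivable_pt_lim u t (u' t)) ->
  (forall t, derivable_pt_lim u' t (hill_potential t * u t)) ->
  forall t, u (t + T) = - u t.
Proof.
  intros Hu Hu' t.
  assert (HFx : Fx t (t + T) = 1).
  { rewrite (dlim_ext_unique (fun s => F s (t + T)) (fun s => - F s t) t _ _
               (fun s => F_antiperiodic_y s t) (D_dx 0 0 t (t + T))
               (dlim_opp _ _ _ (D_dx 0 0 t t))).
    rewrite Fx_diag; ring. }
  pose proof (wronskian u u' Hu Hu' t (t + T)) as W.
  rewrite HFx, F_antiperiodic_y, F_diag in W; lra.
Qed.

End Frieze.

Theorem mainTheorem2 (F : R -> R -> R) (D : nat -> nat -> R -> R -> R) (T : R) :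
  closed_frieze F D T ->
  exists k : R -> R,
    (forall t, k (t + T) = k t) /\
    (forall x y, D 2%nat 0%nat x y = k x * F x y) /\
    (forall x y, D 0%nat 2%nat x y = k y * F x y) /\
    (forall (u u' : R -> R),
        (forall t, derivable_pt_lim u t (u' t)) ->
        (forall t, derivable_pt_lim u' t (k t * u t)) ->
        forall t, u (t + T) = - u t).
Proof.
  intros [HT [[<- [Dx [Dy _]]] [L [Fd [Fyd [Pos [Px Py]]]]]]].
  exists (hill_potential D); repeat split.
  - exact (hill_potential_periodic D Dx Dy L T HT Pos Px).
  - exact (hill_x D Dx Dy L).
  - exact (hill_y D Dx Dy L Fd Fyd).
  - exact (hill_solutions_antiperiodic D Dx Dy L Fd Fyd T Py).
Qed.
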